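(* Let $p,q\ge2$ and $m\ge3$ be integers with $p=q$ whenever $m$ is odd. Define $c=-\cos(\pi/m)$ and $\alpha=-\left(\frac{\cos(\pi/p-\pi/q)+\cos(2\pi/m)}{2\sin(\pi/p)\sin(\pi/q)}\right)^{1/2}$. Then $\alpha\le c$. *)

From Stdlib Require Export Reals.

(* With a = π/p, b = π/q, t = π/m and 2cos²t = 1 + cos 2t, the inequality
   cos t ≤ -α amounts to  cos a cos b + cos 2t (1 - sin a sin b) ≥ 0.
   For odd m we have a = b and the left side is cos² a (1 + cos 2t); for even
   m = 2k we have 2t = π/k with k ≥ 2, so every factor is nonnegative. *)
From Stdlib Require Import Reals Lra Lia.
Open Scope R_scope.

Lemma PI_div_INR_bounds (n : nat) : (2 <= n)%nat -> 0 < PI / INR n <= PI / 2.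
Proof.
  intros hn.
  assert (h2n : 2 <= INR n) by (change 2 with (INR 2); apply le_INR; exact hn).
  pose proof PI_RGT_0.
  split.
  - apply Rdiv_lt_0_compat; lra.
  - apply Rmult_le_compat_l; [lra |]. apply Rinv_le_contravar; lra.
Qed.

Lemma sin_PI_div_pos (n : nat) : (2 <= n)%nat -> 0 < sin (PI / INR n).
Proof.
  intros hn; pose proof (PI_div_INR_bounds n hn); pose proof PI_RGT_0.
  apply sin_gt_0; lra.
Qed.

Lemma cos_PI_div_ge0 (n : nat) : (2 <= n)%nat -> 0 <= cos (PI / INR n).
Proof.
  intros hn; pose proof (PI_div_INR_bounds n hn).
  apply cos_ge_0; lra.
Qed.

Lemma le_sqrt_of_sqr_le (x y : R) : 0 <= y -> y ^ 2 <= x -> y <= sqrt x.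
Proof.
  intros hy hyx.
  rewrite <- (sqrt_pow2 y hy).
  apply sqrt_le_1_alt; exact hyx.
Qed.

Lemma cos_sqr_le_ratio (a b t : R) :
  0 < sin a -> 0 < sin b ->
  0 <= cos a * cos b + cos (2 * t) * (1 - sin a * sin b) ->
  cos t ^ 2 <= (cos (a - b) + cos (2 * t)) / (2 * sin a * sin b).
Proof.
  intros ha hb hform.
  assert (hden : 0 < 2 * sin a * sin b) by (apply Rmult_lt_0_compat; lra).
  apply Rmult_le_reg_r with (2 * sin a * sin b); [exact hden |].
  replace (_ / _ * _) with (cos (a - b) + cos (2 * t)) by (field; lra).
  rewrite cos_minus, (cos_2a_cos t) in *.
  nra.
Qed.

Lemma cos_form_diag_ge0 (a s : R) :
  0 <= cos a * cos a + cos s * (1 - sin a * sin a).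
Proof.
  pose proof (sin2_cos2 a) as hpyth; unfold Rsqr in hpyth.
  pose proof (COS_bound s) as [hcos _].
  replace (1 - sin a * sin a) with (cos a * cos a) by lra.
  nra.
Qed.

Lemma cos_form_ge0 (a b s : R) :
  0 <= cos a -> 0 <= cos b -> 0 <= cos s ->
  0 <= cos a * cos b + cos s * (1 - sin a * sin b).
Proof.
  intros ha hb hs.
  assert (hsin : sin a * sin b <= 1)
    by (pose proof (SIN_bound a); pose proof (SIN_bound b); nra).
  apply Rplus_le_le_0_compat; apply Rmult_le_pos; lra.
Qed.

Theorem lemma2p4 (p q m : nat)
  (hp : (2 <= p)%nat) (hq : (2 <= q)%nat) (hm : (3 <= m)%nat)
  (hodd : Nat.odd m = true -> p = q) :
  let c := - cos (PI / INR m) in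
  let alpha := - sqrt ((cos (PI / INR p - PI / INR q) + cos (2 * PI / INR m))
                       / (2 * sin (PI / INR p) * sin (PI / INR q))) in
  alpha <= c.
Proof.
  intros c alpha; unfold c, alpha.
  assert (hm0 : 0 < INR m) by (apply lt_0_INR; lia).
  replace (2 * PI / INR m) with (2 * (PI / INR m)) by (field; lra).
  apply Ropp_le_contravar, le_sqrt_of_sqr_le; [apply cos_PI_div_ge0; lia |].
  apply cos_sqr_le_ratio; [apply sin_PI_div_pos; assumption .. |].
  destruct (Nat.Even_or_Odd m) as [[k ->] | hmodd].
  - replace (2 * (PI / INR (2 * k))) with (PI / INR k)
      by (rewrite mult_INR in *; simpl INR in *; field; nra).
    apply cos_form_ge0; apply cos_PI_div_ge0; lia.
  - rewrite <- (hodd (proj2 (Nat.odd_spec m) hmodd)).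
    apply cos_form_diag_ge0.
Qed.
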